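(* Let $r\ge4$ and $n\ge1$. Define $d=b_r$ if $r\le (1+2^n)^2/2^n$, and $d=1+2^n$ otherwise. For $i\in\{0,1,\dots,2^n-1\}$ let $X_i=(x_{j,i})_{j\ge1}$ with $x_{j,i}=d^{\,j+i/2^n}$. Then each $X_i$ has robustness at most $r$, and for every $T\ge d$, $$\frac{T}{\max_{0\le i\le 2^n-1}\ell(X_i,T)}\ \le\ \frac{d^{1+\frac{1}{2^n}}}{d-1}.$$ (That is, the scheme that uses an error-free $n$-bit prediction to select the best schedule among $X_0,\dots,X_{2^n-1}$ has robustness at most $r$ and consistency at most $d^{1+1/2^n}/(d-1)$.)
   Context: A schedule is an increasing sequence $X=(x_j)_{j\ge1}$ of positive reals (contract lengths), with completion times $S_j=\sum_{k=1}^j x_k$. For $T>0$, $\ell(X,T)=\max\{x_j: S_j\le T\}$ ($0$ if none). The robustness of $X$ is $\sup_{j\ge2}S_j/x_{j-1}$. For $r\ge4$, $b_r=\frac{r+\sqrt{r^2-4r}}{2}$. *)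

From Stdlib Require Import Reals Lra Lia List ClassicalEpsilon.
From Coquelicot Require Import Coquelicot.
Open Scope R_scope.

(* A schedule is a sequence X : nat -> R, used at indices j >= 1. *)
Definition schedule := nat -> R.

Definition S (X : schedule) (j : nat) : R :=
  fold_right Rplus 0 (map X (seq 1 j)).

Definition is_ell (X : schedule) (T v : R) : Prop :=
  (exists j, (1 <= j)%nat /\ S X j <= T /\ v = X j /\
     (forall k, (1 <= k)%nat -> S X k <= T -> X k <= v))
  \/ ((forall j, (1 <= j)%nat -> T < S X j) /\ v = 0).

(* l(X,T), chosen by Hilbert epsilon (the max exists for positive schedules). *)
Definition ell (X : schedule) (T : R) : R :=
  epsilon (inhabits 0) (fun v => is_ell X T v).

Definition robustness (X : schedule) : Rbar :=
  Lub_Rbar (fun y => exists j, (2 <= j)%nat /\ y = S X j / X (j - 1)%nat).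

Definition b (r : R) : R := (r + sqrt (r ^ 2 - 4 * r)) / 2.

Definition dval (r : R) (n : nat) : R :=
  if Rle_dec r ((1 + 2 ^ n) ^ 2 / 2 ^ n) then b r else 1 + 2 ^ n.

Definition Xsched (d : R) (n i : nat) : schedule :=
  fun j => Rpower d (INR j + INR i / 2 ^ n).

(* max over i in {0,...,2^n - 1} of l(X_i, T) (all l values are >= 0) *)
Definition max_ell (d : R) (n : nat) (T : R) : R :=
  fold_right Rmax 0 (map (fun i => ell (Xsched d n i) T) (seq 0 (2 ^ n))).

From Stdlib Require Import Reals Lra Lia List ClassicalEpsilon Classical.
From Coquelicot Require Import Coquelicot.
Open Scope R_scope.

(* Write N = 2^n and P_i = d^(i/N), so that X_i is the
   geometric schedule x_{j,i} = P_i d^j.  Its completion times satisfy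
   S_j (d-1) = P_i (d^(j+1) - d), hence S_j < x_{j,i} d/(d-1).
   - Robustness: S_j / x_{j-1,i} < d^2/(d-1), and the choice of d makes
     d^2/(d-1) <= r (b_r is a root of b^2 = r (b - 1)).
   - Consistency: the contract lengths of all X_i together form the grid
     { d^(k/N) : k >= N }, with x_{k/N, k mod N} = d^(k/N).  Given T >= d,
     put y = T (d-1)/d and pick the grid point x with x <= y < x d^(1/N)
     (or x = d if y < d).  That contract is completed by time T, so
     l(X_i, T) >= x, and y < x d^(1/N) is exactly T/x <= d^(1+1/N)/(d-1). *)

Lemma fold_plus_init (l : list R) (a : R) :
  fold_right Rplus a l = fold_right Rplus 0 l + a.
Proof. induction l as [|x l IH]; simpl; [lra | rewrite IH; lra]. Qed.

Lemma S_succ (X : schedule) (j : nat) : S X (Datatypes.S j) = S X j + X (Datatypes.S j).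
Proof.
  unfold S. rewrite seq_S, map_app, fold_right_app. simpl.
  rewrite fold_plus_init. replace (1 + j)%nat with (Datatypes.S j) by lia. lra.
Qed.

Lemma nat_search (P : nat -> Prop) (m : nat) : forall a, P a -> ~ P (a + m)%nat ->
  exists k, (a <= k)%nat /\ P k /\ ~ P (Datatypes.S k).
Proof.
  induction m as [|m IH]; intros a Pa nP.
  - rewrite Nat.add_0_r in nP. contradiction.
  - destruct (classic (P (Datatypes.S a))) as [HS|HS].
    + destruct (IH (Datatypes.S a) HS) as [k [Hak Hk]].
      { now replace (Datatypes.S a + m)%nat with (a + Datatypes.S m)%nat by lia. }
      exists k. split; [lia | exact Hk].
    + exists a. split; [lia | tauto].
Qed.

Section NondecreasingSchedule.
Variable X : schedule.
Hypothesis X_ge1 : forall k, 1 <= X k.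
Hypothesis X_step : forall k, X k <= X (Datatypes.S k).

Lemma X_monotone k m : (k <= m)%nat -> X k <= X m.
Proof. induction 1 as [|m _ IH]; [lra | specialize (X_step m); lra]. Qed.

Lemma S_monotone k m : (k <= m)%nat -> S X k <= S X m.
Proof.
  induction 1 as [|m _ IH]; [lra |].
  rewrite S_succ. specialize (X_ge1 (Datatypes.S m)). lra.
Qed.

Lemma S_ge_index k : INR k <= S X k.
Proof.
  induction k as [|k IH]; [unfold S; simpl; lra |].
  rewrite S_succ, S_INR. specialize (X_ge1 (Datatypes.S k)). lra.
Qed.

Lemma is_ell_exists T : exists v, is_ell X T v.
Proof.
  destruct (Rle_dec (S X 1) T) as [H1|H1].
  - destruct (INR_unbounded T) as [M HM].
    assert (HM' : ~ (S X (1 + M) <= T)).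
    { pose proof (S_ge_index (1 + M)) as HS. rewrite plus_INR in HS. simpl INR in HS. lra. }
    destruct (nat_search (fun k => S X k <= T) M 1 H1 HM') as [k [Hk1 [Hk HkS]]].
    exists (X k). left. exists k. repeat split; auto.
    intros k' _ Hk'. apply X_monotone.
    destruct (Nat.le_gt_cases k' k) as [Hle|Hgt]; [exact Hle |].
    exfalso. apply HkS. eapply Rle_trans; [apply S_monotone; exact Hgt | exact Hk'].
  - exists 0. right. split; [| reflexivity]. intros j Hj.
    pose proof (S_monotone 1 j Hj). lra.
Qed.

Lemma ell_ge T j : (1 <= j)%nat -> S X j <= T -> X j <= ell X T.
Proof.
  intros Hj HT.
  destruct (epsilon_spec (inhabits 0) (fun v => is_ell X T v) (is_ell_exists T))
    as [[k [_ [_ [_ Hmax]]]] | [Hnone _]].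
  - exact (Hmax j Hj HT).
  - specialize (Hnone j Hj). lra.
Qed.
End NondecreasingSchedule.

Lemma fold_max_ge (f : nat -> R) (l : list nat) (x : nat) :
  In x l -> f x <= fold_right Rmax 0 (map f l).
Proof.
  induction l as [|a l IH]; simpl; [tauto |]. intros [->|Hx].
  - apply Rmax_l.
  - eapply Rle_trans; [apply IH; exact Hx | apply Rmax_r].
Qed.

Section GeometricSchedule.
Variables (d : R) (n : nat).
Hypothesis d_gt1 : 1 < d.

Lemma offset_ge1 (i : nat) : 1 <= Rpower d (INR i / 2 ^ n).
Proof.
  rewrite <- (Rpower_O d) at 1 by lra. apply Rle_Rpower; [lra |].
  apply Rmult_le_pos; [apply pos_INR | left; apply Rinv_0_lt_compat, pow_lt; lra].
Qed.

Lemma Xsched_pow (i j : nat) : Xsched d n i j = d ^ j * Rpower d (INR i / 2 ^ n).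
Proof. unfold Xsched. rewrite Rpower_plus, Rpower_pow by lra. reflexivity. Qed.

Lemma Xsched_ge1 (i j : nat) : 1 <= Xsched d n i j.
Proof.
  rewrite Xsched_pow. pose proof (offset_ge1 i). pose proof (pow_R1_Rle d j ltac:(lra)). nra.
Qed.

Lemma Xsched_succ (i j : nat) : Xsched d n i (Datatypes.S j) = d * Xsched d n i j.
Proof. rewrite !Xsched_pow. simpl. ring. Qed.

Lemma Xsched_step (i j : nat) : Xsched d n i j <= Xsched d n i (Datatypes.S j).
Proof. rewrite Xsched_succ. pose proof (Xsched_ge1 i j). nra. Qed.

Lemma S_Xsched (i j : nat) :
  S (Xsched d n i) j * (d - 1) = Rpower d (INR i / 2 ^ n) * (d ^ (Datatypes.S j) - d).
Proof.
  induction j as [|j IH].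
  - unfold S. simpl. ring.
  - rewrite S_succ, Rmult_plus_distr_r, IH, Xsched_pow. simpl. ring.
Qed.

Lemma S_Xsched_lt (i j : nat) : S (Xsched d n i) j < Xsched d n i j * d / (d - 1).
Proof.
  apply (Rmult_lt_reg_r (d - 1)); [lra |].
  replace (Xsched d n i j * d / (d - 1) * (d - 1)) with (Xsched d n i j * d) by (field; repeat split; lra).
  rewrite S_Xsched, Xsched_pow. pose proof (offset_ge1 i). simpl. nra.
Qed.

Lemma ratio_lt (i j : nat) : (2 <= j)%nat ->
  S (Xsched d n i) j / Xsched d n i (j - 1)%nat < d ^ 2 / (d - 1).
Proof.
  intro Hj. destruct j as [|m]; [lia |]. replace (Datatypes.S m - 1)%nat with m by lia.
  pose proof (Xsched_ge1 i m) as Hx.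
  apply (Rmult_lt_reg_r (Xsched d n i m)); [lra |].
  replace (S (Xsched d n i) (Datatypes.S m) / Xsched d n i m * Xsched d n i m)
    with (S (Xsched d n i) (Datatypes.S m)) by (field; repeat split; lra).
  replace (d ^ 2 / (d - 1) * Xsched d n i m) with (Xsched d n i (Datatypes.S m) * d / (d - 1))
    by (rewrite Xsched_succ; field; lra).
  apply S_Xsched_lt.
Qed.

Lemma Xsched_grid (k : nat) :
  Xsched d n (k mod 2 ^ n)%nat (k / 2 ^ n)%nat = Rpower d (INR k / 2 ^ n).
Proof.
  assert (HN : (2 ^ n <> 0)%nat) by (apply Nat.pow_nonzero; lia).
  assert (HNR : INR (2 ^ n)%nat = 2 ^ n) by (rewrite pow_INR; reflexivity).
  unfold Xsched. f_equal.
  rewrite (Nat.div_mod k (2 ^ n)%nat HN) at 3.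
  rewrite plus_INR, mult_INR, HNR. field. apply pow_nonzero. lra.
Qed.

Lemma grid_cell (y : R) : 1 <= y ->
  exists k : nat, Rpower d (INR k / 2 ^ n) <= y /\ y < Rpower d ((INR k + 1) / 2 ^ n).
Proof.
  intro Hy. assert (HN : 0 < 2 ^ n) by (apply pow_lt; lra).
  assert (Hlnd : 0 < ln d) by (rewrite <- ln_1; apply ln_increasing; lra).
  destruct (INR_unbounded (2 ^ n * ln y / ln d)) as [m Hm].
  assert (Hbig : ~ Rpower d (INR m / 2 ^ n) <= y).
  { apply Rlt_not_le. unfold Rpower. rewrite <- (exp_ln y) at 1 by lra.
    apply exp_increasing.
    apply (Rmult_lt_reg_r (2 ^ n / ln d)); [apply Rdiv_lt_0_compat; lra |].
    replace (INR m / 2 ^ n * ln d * (2 ^ n / ln d)) with (INR m) by (field; repeat split; lra).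
    replace (ln y * (2 ^ n / ln d)) with (2 ^ n * ln y / ln d) by (field; repeat split; lra). lra. }
  assert (Hzero : Rpower d (INR 0 / 2 ^ n) <= y).
  { simpl INR. replace (0 / 2 ^ n) with 0 by (field; repeat split; lra). rewrite Rpower_O; lra. }
  destruct (nat_search (fun k => Rpower d (INR k / 2 ^ n) <= y) m 0 Hzero Hbig)
    as [k [_ [Hk HkS]]].
  exists k. split; [exact Hk |]. rewrite <- S_INR. lra.
Qed.

Lemma consistency_of_hit (T x : R) : 0 < x ->
  T * (d - 1) / d <= x * Rpower d (1 / 2 ^ n) ->
  T / x <= Rpower d (1 + 1 / 2 ^ n) / (d - 1).
Proof.
  intros Hx Hhit. rewrite Rpower_plus, Rpower_1 by lra.
  replace (T / x) with (T * (d - 1) / d * (d / ((d - 1) * x))) by (field; repeat split; lra).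
  replace (d * Rpower d (1 / 2 ^ n) / (d - 1))
    with (x * Rpower d (1 / 2 ^ n) * (d / ((d - 1) * x))) by (field; repeat split; lra).
  apply Rmult_le_compat_r; [| exact Hhit].
  left. apply Rdiv_lt_0_compat; [lra | apply Rmult_lt_0_compat; lra].
Qed.

Lemma good_contract (T : R) : d <= T ->
  exists i j, (i < 2 ^ n)%nat /\ (1 <= j)%nat /\ S (Xsched d n i) j <= T /\
    T * (d - 1) / d <= Xsched d n i j * Rpower d (1 / 2 ^ n).
Proof.
  intro HT. assert (HN : 0 < 2 ^ n) by (apply pow_lt; lra).
  assert (HNnat : (2 ^ n <> 0)%nat) by (apply Nat.pow_nonzero; lia).
  assert (Hroot : 1 <= Rpower d (1 / 2 ^ n)).
  { rewrite <- (Rpower_O d) at 1 by lra. apply Rle_Rpower; [lra |].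
    apply Rmult_le_pos; [lra | left; apply Rinv_0_lt_compat; lra]. }
  assert (Hcomplete : forall i j, Xsched d n i j <= T * (d - 1) / d -> S (Xsched d n i) j <= T).
  { intros i j Hx. left. eapply Rlt_le_trans; [apply S_Xsched_lt |].
    apply (Rmult_le_reg_r ((d - 1) / d)); [apply Rdiv_lt_0_compat; lra |].
    replace (Xsched d n i j * d / (d - 1) * ((d - 1) / d)) with (Xsched d n i j) by (field; repeat split; lra).
    replace (T * ((d - 1) / d)) with (T * (d - 1) / d) by (field; repeat split; lra). exact Hx. }
  destruct (Rlt_dec (T * (d - 1) / d) d) as [Hsmall|Hlarge].
  - (* first contract of X_0, of length d *)
    assert (Hx : Xsched d n 0%nat 1%nat = d).
    { rewrite Xsched_pow. simpl INR. replace (0 / 2 ^ n) with 0 by (field; repeat split; lra).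
      rewrite Rpower_O by lra. ring. }
    exists 0%nat, 1%nat. repeat split; [apply Nat.neq_0_lt_0; exact HNnat | lia | |].
    + rewrite S_succ, Hx. unfold S. simpl. lra.
    + rewrite Hx. nra.
  - (* a grid cell of y = T (d-1)/d *)
    apply Rnot_lt_le in Hlarge.
    destruct (grid_cell (T * (d - 1) / d) ltac:(lra)) as [k [Hlow Hup]].
    assert (Hk : (2 ^ n <= k)%nat).
    { assert (Hexp : 1 < (INR k + 1) / 2 ^ n).
      { apply Rnot_le_lt. intro Hle. apply (Rle_Rpower d) in Hle; [| lra].
        rewrite Rpower_1 in Hle by lra. lra. }
      assert (Hlt : INR (2 ^ n) < INR (Datatypes.S k)).
      { rewrite pow_INR. replace (INR 2) with 2 by (simpl; ring). rewrite S_INR.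
        apply (Rmult_lt_reg_r (/ 2 ^ n)); [apply Rinv_0_lt_compat; lra |].
        rewrite Rinv_r by lra. exact Hexp. }
      apply INR_lt in Hlt. lia. }
    exists (k mod 2 ^ n)%nat, (k / 2 ^ n)%nat. rewrite Xsched_grid.
    repeat split.
    + apply Nat.mod_upper_bound. exact HNnat.
    + apply Nat.div_str_pos. lia.
    + apply Hcomplete. rewrite Xsched_grid. exact Hlow.
    + rewrite <- Rpower_plus. left.
      replace (INR k / 2 ^ n + 1 / 2 ^ n) with ((INR k + 1) / 2 ^ n) by (field; repeat split; lra).
      exact Hup.
Qed.
End GeometricSchedule.

Lemma b_root (r : R) : 4 <= r -> 1 < b r /\ b r ^ 2 = r * (b r - 1).
Proof.
  intro hr. unfold b. set (s := sqrt (r ^ 2 - 4 * r)).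
  assert (Hs0 : 0 <= s) by apply sqrt_pos.
  assert (Hs2 : s * s = r ^ 2 - 4 * r) by (apply sqrt_sqrt; nra).
  split; [lra | nra].
Qed.

Lemma dval_spec (r : R) (n : nat) : 4 <= r ->
  1 < dval r n /\ dval r n ^ 2 / (dval r n - 1) <= r.
Proof.
  intro hr. unfold dval. destruct (Rle_dec r ((1 + 2 ^ n) ^ 2 / 2 ^ n)) as [_|Hbig].
  - destruct (b_root r hr) as [Hb1 Hb2]. split; [exact Hb1 |].
    right. rewrite Hb2. field. lra.
  - assert (HN : 1 <= 2 ^ n) by (apply pow_R1_Rle; lra).
    split; [lra |]. replace (1 + 2 ^ n - 1) with (2 ^ n) by ring. lra.
Qed.

Theorem theorem3 (r : R) (n : nat) (hr : 4 <= r) (hn : (1 <= n)%nat) :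
  let d := dval r n in
  (forall i : nat, (i < 2 ^ n)%nat -> Rbar_le (robustness (Xsched d n i)) r) /\
  (forall T : R, d <= T ->
     T / max_ell d n T <= Rpower d (1 + 1 / 2 ^ n) / (d - 1)).
Proof.
  intro d. destruct (dval_spec r n hr) as [hd hdr]. fold d in hd, hdr.
  split.
  - intros i _. apply (proj2 (Lub_Rbar_correct _)).
    intros y [j [Hj ->]]. simpl. left.
    eapply Rlt_le_trans; [apply ratio_lt; assumption | exact hdr].
  - intros T hT.
    destruct (good_contract d n hd T hT) as [i [j [Hi [Hj [HS Hhit]]]]].
    pose proof (Xsched_ge1 d n hd i j) as Hx1.
    assert (Hmax : Xsched d n i j <= max_ell d n T).
    { apply (Rle_trans _ (ell (Xsched d n i) T)).
      - apply ell_ge; auto using Xsched_ge1, Xsched_step.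
      - apply (fold_max_ge (fun i => ell (Xsched d n i) T)). apply in_seq. lia. }
    assert (Hx0 : 0 < Xsched d n i j) by lra.
    eapply Rle_trans; [| exact (consistency_of_hit d n hd T _ Hx0 Hhit)].
    unfold Rdiv. apply Rmult_le_compat_l; [lra |]. apply Rinv_le_contravar; lra.
Qed.
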